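(* Let $G$ be an undirected unweighted graph on $n$ vertices with minimum cut value $c\geq 1$, and fix a minimum cut $C$ of $G$. If Karger's contraction process is run on $G$ until there are at most $cn$ edges remaining in the (contracted) graph, then $C$ survives with at least a constant probability (bounded below by an absolute constant independent of $G$).
   Context: Karger's contraction process: repeatedly choose a uniformly random edge of the current multigraph and contract its two endpoints into a single super-vertex, keeping parallel edges and removing self-loops. Each super-vertex corresponds to a set of original vertices. A cut $C$ of $G$ (the set of edges between $S$ and $V\setminus S$) survives if none of its edges has been contracted, i.e. every super-vertex is contained in $S$ or in $V\setminus S$. The minimum cut value is $\min_{\emptyset\ne S\subsetneq V}$ of the number of edges between $S$ and $V\setminus S$. *)

From mathcomp Require Import all_boot all_order all_algebra.
Set Implicit Arguments. Unset Strict Implicit. Unset Printing Implicit Defensive.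
Import Order.TTheory GRing.Theory Num.Theory.

Section Karger.
Variable T : finType.

Definition simple_graph (E : {set {set T}}) : Prop :=
  forall x, x \in E -> #|x| = 2.

Definition cut_edges (E : {set {set T}}) (S : {set T}) : {set {set T}} :=
  [set x in E | #|x :&: S| == 1%N].

Definition proper_nonempty (S : {set T}) : bool := (S != set0) && (S != setT).

Definition is_min_cut_value (E : {set {set T}}) (c : nat) : Prop :=
  (exists2 S, proper_nonempty S & #|cut_edges E S| = c) /\
  (forall S, proper_nonempty S -> c <= #|cut_edges E S|)%N.

(* A state of the contraction process is the partition P of T into
   super-vertices.  The edges of the contracted multigraph (parallel edges
   kept, self-loops removed) are exactly the original edges not contained in
   a single super-vertex. *)
Definition remaining (E : {set {set T}}) (P : {set {set T}}) : {set {set T}} :=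
  [set x in E | ~~ [exists B in P, x \subset B]].

Definition contract (P : {set {set T}}) (x : {set T}) : {set {set T}} :=
  [set B in P | [disjoint B & x]] :|:
  [set \bigcup_(B in P | ~~ [disjoint B & x]) B].

Definition initial_partition : {set {set T}} := [set [set v] | v : T].

Definition survives (S : {set T}) (P : {set {set T}}) : bool :=
  [forall B in P, (B \subset S) || (B \subset ~: S)].

(* Probability that the cut of S survives when the process, started in state P,
   is run until at most m edges remain; each step contracts a uniformly random
   remaining edge.  fuel bounds the number of steps (#|T| suffices, since each
   contraction decreases the number of super-vertices and with a single
   super-vertex no edge remains). *)
Fixpoint surv_prob (E : {set {set T}}) (S : {set T}) (m : nat)
    (fuel : nat) (P : {set {set T}}) : rat :=
  if (#|remaining E P| <= m)%N then ((survives S P)%:R)%R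
  else match fuel with
       | 0 => ((survives S P)%:R)%R
       | k.+1 => ((\sum_(x in remaining E P) surv_prob E S m k (contract P x))
                  / #|remaining E P|%:R)%R
       end.

Definition karger_survival (E : {set {set T}}) (S : {set T}) (m : nat) : rat :=
  surv_prob E S m #|T| initial_partition.

End Karger.

(* While more than c·n edges remain, a uniformly random remaining edge lies in
   the cut with probability at most c/(c·n) = 1/n, and contracting an edge
   outside the cut keeps the cut alive.  At most n contractions take place,
   so the cut survives with probability at least (1 - 1/n)^n >= 1/6. *)

From mathcomp Require Import all_boot all_order all_algebra.
From mathcomp Require Import zify ring lra.
Set Implicit Arguments. Unset Strict Implicit. Unset Printing Implicit Defensive.
Import Order.TTheory GRing.Theory Num.Theory.
Local Open Scope ring_scope.

Lemma bernoulli_subr (R : realDomainType) (x : R) k :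
  x <= 1 -> 1 - x *+ k <= (1 - x) ^+ k.
Proof.
move=> x_le1; elim: k => [|k IHk]; first by rewrite expr0 mulr0n subr0.
have x1_ge0 : 0 <= 1 - x by rewrite subr_ge0.
have : (1 - x *+ k) * (1 - x) <= (1 - x) ^+ k * (1 - x) by rewrite ler_wpM2r.
rewrite exprSr mulrSr -mulr_natl.
have := sqr_ge0 x; have : 0 <= k%:R :> R by []; nra.
Qed.

(* Split n = j + k into halves and apply Bernoulli to each factor: the bound
   is then j k / n^2, and 6 j k >= n^2 as soon as n >= 2. *)
Lemma expr_one_sub_invn_ge (R : realFieldType) n :
  (2 <= n)%N -> 6^-1 <= (1 - n%:R^-1) ^+ n :> R.
Proof.
move=> n_ge2; set x : R := n%:R^-1.
have [j [k [n_jk jk_n]]] : exists j k, n = (j + k)%N /\ (n * n <= 6 * (j * k))%N.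
  by exists n./2, (n - n./2)%N; have := odd_double_half n; case: (odd n) => /=; nia.
have nx : n%:R * x = 1 by rewrite mulfV // pnatr_eq0 -lt0n ltnW.
have x_le1 : x <= 1 by rewrite invf_le1 ?ler1n ?ltr0n ltnW.
have Bj : 1 - j%:R * x <= (1 - x) ^+ j by rewrite mulr_natl bernoulli_subr.
have Bk : 1 - k%:R * x <= (1 - x) ^+ k by rewrite mulr_natl bernoulli_subr.
have jk_sum : j%:R * x + k%:R * x = 1 by rewrite -mulrDl -natrD -n_jk.
have jx_ge0 : 0 <= j%:R * x by rewrite mulr_ge0 ?invr_ge0.
have kx_ge0 : 0 <= k%:R * x by rewrite mulr_ge0 ?invr_ge0.
have jk_ge : 1 <= 6 * (j%:R * x * (k%:R * x)).
  have : (n * n)%:R * x ^+ 2 <= 6 * (j * k)%:R * x ^+ 2.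
    by rewrite ler_wpM2r ?sqr_ge0 // -natrM ler_nat.
  by rewrite !natrM; nra.
rewrite n_jk exprD; apply: le_trans (ler_pM _ _ Bj Bk); [|lra|lra].
have -> : 1 - j%:R * x = k%:R * x by lra.
have -> : 1 - k%:R * x = j%:R * x by lra.
by rewrite mulrC; lra.
Qed.

Lemma one_sub_invn_ge0 (R : numFieldType) n : 0 <= 1 - n%:R^-1 :> R.
Proof.
case: n => [|n]; first by rewrite invr0 subr0.
by rewrite subr_ge0 invf_le1 ?ler1n ?ltr0n.
Qed.

Lemma one_sub_invn_mulr_le (R : numFieldType) (n c r : nat) :
  (0 < n)%N -> (c * n <= r)%N -> (1 - n%:R^-1) * r%:R <= r%:R - c%:R :> R.
Proof.
move=> n_gt0 crn; rewrite mulrBl mul1r lerD2l lerN2 mulrC ler_pdivlMr ?ltr0n //.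
by rewrite -natrM ler_nat.
Qed.

Section Contraction.
Variable T : finType.
Implicit Types (S : {set T}) (P : {set {set T}}) (x : {set T}).

Lemma survivesC S P : survives (~: S) P = survives S P.
Proof. by apply/forallP/forallP => SP B; move: (SP B); rewrite setCK orbC. Qed.

Lemma survives_initial S : survives S (initial_partition T).
Proof.
apply/forall_inP => _ /imsetP[v _ ->]; rewrite !sub1set inE.
by case: (v \in S).
Qed.

Lemma survives_contract_sub S P x :
  x \subset S -> survives S P -> survives S (contract P x).
Proof.
move=> xS /forall_inP SP; apply/forall_inP => B.
rewrite in_setU in_set1 => /orP[|/eqP->].
  by rewrite inE => /andP[/SP].
apply/orP; left; apply/bigcupsP => B' /andP[/SP/orP[//|B'_notS]].
rewrite disjoint_subset => /negP[]; apply: subset_trans B'_notS _.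
by apply/subsetP => v; rewrite !inE; apply: contra (subsetP xS v).
Qed.

Lemma survives_contract S P x :
  #|x| = 2%N -> #|x :&: S| != 1%N -> survives S P -> survives S (contract P x).
Proof.
move=> x2 x_uncut SP; have := cardsID S x; rewrite x2 => x_split.
have [x_notS|x_inS] : #|x :&: S| = 0%N \/ #|x :&: S| = 2%N by lia.
- rewrite -survivesC; apply: survives_contract_sub.
    by rewrite -disjoints_subset -setI_eq0 -cards_eq0 x_notS.
  by rewrite survivesC.
- apply: survives_contract_sub => //.
  suff <- : x :&: S = x by apply: subsetIr.
  by apply/eqP; rewrite eqEcard subsetIl x_inS x2.
Qed.

Lemma surv_prob_ge0 E S m k P : 0 <= surv_prob E S m k P.
Proof.
elim: k P => [|k IHk] P /=; case: ifP => _ //.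
by rewrite divr_ge0 ?sumr_ge0.
Qed.

End Contraction.

Section SurvivalBound.
Variables (T : finType) (E : {set {set T}}) (S : {set T}) (c : nat).
Hypothesis E_simple : simple_graph E.
Hypothesis S_cut : #|cut_edges E S| = c.
Hypothesis T_gt0 : (0 < #|T|)%N.

Local Notation n := #|T|.

Lemma surv_prob_ge_expn m k P :
  (c * n <= m)%N -> survives S P ->
  (1 - n%:R^-1) ^+ k <= surv_prob E S m k P.
Proof.
move=> cn_le_m; elim: k P => [|k IHk] P SP /=.
  by case: ifP; rewrite SP expr0.
case: ifP => [_|/negbT].
  by rewrite SP exprn_ile1 ?one_sub_invn_ge0 ?gerBl ?invr_ge0.
rewrite -ltnNge; set R := remaining E P; set K := cut_edges E S => R_gt.
have uncut_ge :
    (1 - n%:R^-1) ^+ k *+ #|R :\: K| <= \sum_(x in R) surv_prob E S m k (contract P x).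
  rewrite (big_setID K) /= -sumr_const.
  apply: ler_wpDl; first by rewrite sumr_ge0 // => x _; apply: surv_prob_ge0.
  apply: ler_sum => x /setDP[xR xK].
  have xE : x \in E by move: xR; rewrite inE => /andP[].
  apply/IHk/survives_contract => //; first exact: E_simple.
  by move: xK; rewrite inE xE.
have R_le : (#|R| <= #|R :\: K| + c)%N.
  have : (#|R :&: K| <= c)%N by rewrite -S_cut subset_leq_card ?subsetIr.
  by rewrite cardsD; lia.
rewrite ler_pdivlMr ?ltr0n; last by lia.
apply: le_trans uncut_ge; rewrite exprSr -mulrA -[_ *+ #|R :\: K|]mulr_natr.
rewrite ler_wpM2l ?exprn_ge0 ?one_sub_invn_ge0 //.
have cn_le_R : (c * n <= #|R|)%N := leq_trans cn_le_m (ltnW R_gt).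
apply: le_trans (one_sub_invn_mulr_le _ T_gt0 cn_le_R) _.
by rewrite lerBlDr -natrD ler_nat.
Qed.

End SurvivalBound.

Theorem mainTheorem5 :
  exists delta : rat, (0 < delta)%R /\
  forall (T : finType) (E : {set {set T}}) (c : nat) (S : {set T}),
    simple_graph E ->
    is_min_cut_value E c ->
    (1 <= c)%N ->
    proper_nonempty S ->
    #|cut_edges E S| = c ->
    (delta <= karger_survival E S (c * #|T|))%R.
Proof.
exists 6^-1; split => // T E c S E_simple _ _ /andP[S_neq0 S_neqT] S_cut.
have T_ge2 : (2 <= #|T|)%N.
  have S_gt0 : (0 < #|S|)%N by rewrite card_gt0.
  have : (#|S| < #|T|)%N by rewrite -cardsT proper_card // properT.
  lia.
apply: le_trans (expr_one_sub_invn_ge _ T_ge2) _.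
exact: (surv_prob_ge_expn E_simple S_cut (ltnW T_ge2) #|T| (leqnn _) (survives_initial S)).
Qed.
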